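(* Let $\mathcal N$ be an $(M,N,q)$-Schreier norming set, $x^*\in\mathcal N$, $k\in\mathbb N$, and let $\mathcal T$ be a functional tree of $x^*$, so that $$x^*=\sum_{\beta\in\mathcal T\ \text{terminal}}\frac{\prod_{\alpha\preceq\beta}\gamma_\alpha}{\prod_{\alpha\prec\beta}m_\alpha}\,e^*_{j_\beta}.$$ Then $$\Big\{j_\beta:\ \beta\ \text{terminal},\ |x^*(e_{j_\beta})|\ge\frac{2\,|\prod_{\alpha\preceq\beta}\gamma_\alpha|}{m_{2k}},\ j_\beta\ge 2k\Big\}\in S_{p_k-1}.$$
   Context: Notation. $c_{00}$ is the space of finitely supported real sequences, $(e_i)_{i\ge1}$ its unit vector basis and $(e_i^* )_{i\ge1}$ the biorthogonal functionals. For a functional $x^*=\sum_i a_ie_i^*$, ${\rm supp}\,x^*=\{i:a_i\neq0\}$. For finite $E,F\subset\mathbb N$, $E<F$ means $\max E<\min F$. $Ba(\ell_q)$ is the closed unit ball of $\ell_q$ (applied to finite scalar sequences). For an interval $E\subset\mathbb N$, $Ex^*$ is the restriction of $x^*$ to the coordinates in $E$. Schreier families: $S_0=\{\{n\}:n\in\mathbb N\}\cup\{\emptyset\}$ and $S_{n+1}=\{\bigcup_{i=1}^mF_i: m\in\mathbb N,\ F_i\in S_n,\ m\le\min F_1,\ F_1<\dots<F_m\}\cup\{\emptyset\}$. Successive finite sets $E_1<\dots<E_k$ are $S_n$-admissible if $\{\min E_1,\dots,\min E_k\}\in S_n$; a finite block sequence $x_1^*,\dots,x_k^*$ is $S_n$-admissible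 if $({\rm supp}\,x_i^* )_{i=1}^k$ is. Sequences. $M=(m_i)$, $N=(n_i)$ are increasing sequences of positive integers such that (i) $m_1>3$, $m_2=m_1^5$, $m_{2j+1}=m_{2j}^5$ for $j\ge1$, and there is an increasing sequence $(s_i)$ of positive integers with $m_{2j}=\prod_{i=1}^{j-1}m_{2i}^{s_i}$ for $j\ge2$; (ii) defining for $j\ge2$ $f_j=\max\{\rho n_1+\sum_{1\le i<j}\rho_in_{2i}:\ \rho,\rho_i\in\mathbb N\cup\{0\},\ m_1^{\rho}\prod_{1\le i<j}m_{2i}^{\rho_i}<m_{2j}\}$, one has $4f_j<n_{2j}$ for all $j\ge2$, and $5n_1<n_2$. For $k\ge1$ put $p_k=5n_1+\sum_{1\le i<k}s_in_{2i}$ (so $p_1=5n_1$). Norming sets. A set $\mathcal N\subset{\rm span}\{e_i^*\}$ is norming if it contains every $e_n^*$, satisfies $|x^*(e_n)|\le1$ for all $x^*\in\mathcal N$, $n\in\mathbb N$, is symmetric, and $Ex^*\in\mathcal N$ for all $x^*\in\mathcal N$ and intervals $E\subset\mathbb N$. $(M,N,q)$-Schreier. Let $1<p,q<\infty$, $1/p+1/q=1$. For $k\ge1$ let $\mathcal N_k$ be the set of all $\frac1{m_{2k}}\sum_{i=1}^d\gamma_ix_i^*$ where $d\in\mathbb N$, $(\gamma_i)_{i=1}^d\in Ba(\ell_q)$, and $x_1^*,\dots,x_d^*\in\mathcal N$ is an $S_{n_{2k}}$-admissible block sequence. Let $\mathcal N^q_\infty$ be the union over $k\ge0$ of the sets of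 all $\frac1{m_{2k+1}}\sum_{i=1}^d\gamma_iEx_i^*$ where $(\gamma_i)\in 2^{1/p}Ba(\ell_q)$, $E$ is an interval of $\mathbb N$, $x_1^*,\dots,x_d^*$ is an $S_{n_{2k+1}}$-admissible block sequence with $x_i^*\in\mathcal N_{j_i}$ and $j_1,\dots,j_d$ pairwise distinct. A norming set $\mathcal N$ is $(M,N,q)$-Schreier if $\mathcal N_j\subset\mathcal N$ for all $j\ge1$ and $\mathcal N\subset\bigcup_{j\ge1}\mathcal N_j\cup\mathcal N^q_\infty\cup\{\pm e_n^*:n\in\mathbb N\}$. Functional trees. A finite partially ordered set $(\mathcal T,\preceq)$ is a tree if $\{\beta:\beta\preceq\alpha\}$ is linearly ordered for each $\alpha$; it is rooted if it has a unique minimal element (the root). $\alpha\prec\beta$ means $\alpha\preceq\beta$ and $\alpha\ne\beta$; $D_\alpha(\mathcal T)$ is the set of immediate successors of $\alpha$; $\alpha$ is terminal if it has no successors; a branch is a maximal linearly ordered subset. A functional tree of $x^*\in\mathcal N$ is a finite rooted tree $\mathcal T$ with root $\alpha_0$ together with, for each node $\alpha$, a functional $x^*_\alpha\in\mathcal N$ and a nonzero scalar $\gamma_\alpha$, such that: $\gamma_{\alpha_0}\in\{1,-1\}$ and $x^*=\gamma_{\alpha_0}x^*_{\alpha_0}$; if $\alpha$ is terminal then $x^*_\alpha=e^*_{j_\alpha}$ for some $j_\alpha\in\mathbb N$; if $\alpha$ is not terminal there is $j\in\mathbb N$ with (setting $m_\alpha=m_j$, $n_\alpha=n_j$) $x^*_\alpha=\frac1{m_\alpha}\sum_{\beta\in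 D_\alpha(\mathcal T)}\gamma_\beta x^*_\beta$, where the $x^*_\beta$, $\beta\in D_\alpha(\mathcal T)$, are nonzero with successive supports and form an $S_{n_\alpha}$-admissible block sequence; if $j$ is even, $(\gamma_\beta)_{\beta\in D_\alpha(\mathcal T)}\in Ba(\ell_q)$; if $j$ is odd, $(\gamma_\beta)_{\beta\in D_\alpha(\mathcal T)}\in 2^{1/p}Ba(\ell_q)$, every $\beta\in D_\alpha(\mathcal T)$ is non-terminal with $m_\beta$ of even index, and the $m_\beta$, $\beta\in D_\alpha(\mathcal T)$, are pairwise distinct. Every element of $\mathcal N$ admits at least one functional tree. For any set $A$ of pairwise incomparable nodes meeting every branch, $x^*=\sum_{\alpha\in A}\frac{\prod_{\beta\preceq\alpha}\gamma_\beta}{\prod_{\beta\prec\alpha}m_\beta}x^*_\alpha$. *)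

From Stdlib Require Import Reals List Arith Lia Sorting.Sorted.
Import ListNotations.
Open Scope R_scope.

(* Functionals x^* = sum a_i e_i^* are represented by their coefficient
   function  i |-> x^*(e_i)  (indices are positive integers; coordinate 0 unused). *)
Definition func := nat -> R.
Definition zerof : func := fun _ => 0.
Definition ev (n : nat) : func := fun i => if Nat.eqb i n then 1 else 0.
Definition fin_supp (x : func) : Prop :=
  x 0%nat = 0 /\ exists B : nat, forall i, (B < i)%nat -> x i = 0.
Definition nonzero (x : func) : Prop := exists i, x i <> 0.
Definition restrict (a b : nat) (x : func) : func :=
  fun i => if (Nat.leb a i && Nat.leb i b)%bool then x i else 0.

(* |g|^q (with 0^q = 0) and the ball c*Ba(l_q) for finite sequences *)
Definition powabs (q g : R) : R := if Req_EM_T g 0 then 0 else Rpower (Rabs g) q.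
Definition in_lq_ball (q c : R) (gs : list R) : Prop :=
  fold_right Rplus 0 (map (powabs q) gs) <= Rpower c q.

Definition lincomb (gs : list R) (xs : list func) : func :=
  fun i => fold_right Rplus 0 (map (fun gx => fst gx * snd gx i) (combine gs xs)).

(* ---------- Schreier families (finite sets as strictly increasing lists) *)
Fixpoint schreier (n : nat) (l : list nat) : Prop :=
  match n with
  | O => l = [] \/ exists k, (1 <= k)%nat /\ l = [k]
  | S n' => l = [] \/
      (StronglySorted lt l /\
       exists Fs : list (list nat), Fs <> [] /\
         Forall (fun F => F <> [] /\ schreier n' F) Fs /\
         l = concat Fs /\ (length Fs <= hd O l)%nat)
  end.

Definition in_schreier (n : nat) (P : nat -> Prop) : Prop :=
  exists l, schreier n l /\ forall i, In i l <-> P i.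

Definition successive (xs : list func) : Prop :=
  forall a b i j, (a < b < length xs)%nat ->
    nth a xs zerof i <> 0 -> nth b xs zerof j <> 0 -> (i < j)%nat.
Definition block_seq (xs : list func) : Prop := Forall nonzero xs /\ successive xs.
Definition is_min_supp (x : func) (k : nat) : Prop :=
  x k <> 0 /\ forall i, (i < k)%nat -> x i = 0.
Definition admissible (n : nat) (xs : list func) : Prop :=
  exists l : list nat, length l = length xs /\
    (forall a, (a < length xs)%nat -> is_min_supp (nth a xs zerof) (nth a l O)) /\
    schreier n l.

Definition nprod (l : list nat) : nat := fold_right Nat.mul 1%nat l.

Definition MN_conditions (m n s : nat -> nat) : Prop :=
  (forall i, (1 <= i)%nat -> (1 <= m i)%nat /\ (m i < m (S i))%nat) /\
  (forall i, (1 <= i)%nat -> (1 <= n i)%nat /\ (n i < n (S i))%nat) /\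
  (forall i, (1 <= i)%nat -> (1 <= s i)%nat /\ (s i < s (S i))%nat) /\
  (3 < m 1)%nat /\
  m 2%nat = (m 1%nat ^ 5)%nat /\
  (forall j, (1 <= j)%nat -> m (2 * j + 1)%nat = (m (2 * j)%nat ^ 5)%nat) /\
  (forall j, (2 <= j)%nat ->
     m (2 * j)%nat = nprod (map (fun i => m (2 * i)%nat ^ s i) (seq 1 (j - 1))))%nat /\
  (* 4 f_j < n_{2j}: every admissible value rho n_1 + sum rho_i n_{2i} is < n_{2j}/4 *)
  (forall (j rho : nat) (rhos : nat -> nat), (2 <= j)%nat ->
     (m 1%nat ^ rho * nprod (map (fun i => m (2 * i)%nat ^ rhos i) (seq 1 (j - 1))) < m (2 * j)%nat)%nat ->
     (4 * (rho * n 1%nat + list_sum (map (fun i => rhos i * n (2 * i)%nat) (seq 1 (j - 1))))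
        < n (2 * j)%nat)%nat) /\
  (5 * n 1%nat < n 2%nat)%nat.

Definition pk (n s : nat -> nat) (k : nat) : nat :=
  (5 * n 1%nat + list_sum (map (fun i => s i * n (2 * i)%nat) (seq 1 (k - 1))))%nat.

Definition norming_set (NN : func -> Prop) : Prop :=
  (forall x, NN x -> fin_supp x) /\
  (forall j, (1 <= j)%nat -> NN (ev j)) /\
  (forall x j, NN x -> Rabs (x j) <= 1) /\
  (forall x, NN x -> NN (fun i => - x i)) /\
  (forall x a b, NN x -> NN (restrict a b x)).

Definition Nk (m n : nat -> nat) (q : R) (NN : func -> Prop) (k : nat) (x : func) : Prop :=
  exists (xs : list func) (gs : list R),
    xs <> [] /\ length gs = length xs /\ in_lq_ball q 1 gs /\
    Forall NN xs /\ block_seq xs /\ admissible (n (2 * k)%nat) xs /\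
    x = (fun i => / INR (m (2 * k)%nat) * lincomb gs xs i).

Definition Ninf (m n : nat -> nat) (p q : R) (NN : func -> Prop) (x : func) : Prop :=
  exists (k : nat) (xs : list func) (gs : list R) (js : list nat) (a b : nat),
    xs <> [] /\ length gs = length xs /\ length js = length xs /\
    in_lq_ball q (Rpower 2 (/ p)) gs /\
    block_seq xs /\ admissible (n (2 * k + 1)%nat) xs /\ NoDup js /\
    (forall c, (c < length xs)%nat ->
        (1 <= nth c js O)%nat /\ Nk m n q NN (nth c js O) (nth c xs zerof)) /\
    x = (fun i => / INR (m (2 * k + 1)%nat) * lincomb gs (map (restrict a b) xs) i).

Definition schreier_norming (m n : nat -> nat) (p q : R) (NN : func -> Prop) : Prop :=
  norming_set NN /\
  (forall j x, (1 <= j)%nat -> Nk m n q NN j x -> NN x) /\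
  (forall x, NN x ->
     (exists j, (1 <= j)%nat /\ Nk m n q NN j x) \/ Ninf m n p q NN x \/
     (exists j, (1 <= j)%nat /\ (x = ev j \/ x = (fun i => - ev j i)))).

(* Leaf g j : terminal node with gamma = g, x_alpha = e_j^*;
   Node g k ts : node with gamma = g, m_alpha = m_k, n_alpha = n_k, successors ts *)
Inductive ftree : Type :=
| Leaf (g : R) (j : nat)
| Node (g : R) (k : nat) (ts : list ftree).

Definition gam (t : ftree) : R := match t with Leaf g _ => g | Node g _ _ => g end.
Definition node_m (m : nat -> nat) (t : ftree) : nat :=
  match t with Leaf _ _ => O | Node _ k _ => m k end.
Definition node_index (t : ftree) : option nat :=
  match t with Leaf _ _ => None | Node _ k _ => Some k end.

Fixpoint fval (m : nat -> nat) (t : ftree) {struct t} : func :=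
  match t with
  | Leaf _ j => ev j
  | Node _ k ts => fun i => / INR (m k) *
      (fix go (ts : list ftree) : R :=
         match ts with [] => 0 | t' :: r => gam t' * fval m t' i + go r end) ts
  end.

Fixpoint tvalid (m n : nat -> nat) (p q : R) (NN : func -> Prop) (t : ftree) {struct t} : Prop :=
  match t with
  | Leaf g j => g <> 0 /\ (1 <= j)%nat /\ NN (ev j)
  | Node g k ts =>
      g <> 0 /\ (1 <= k)%nat /\ ts <> [] /\ NN (fval m t) /\
      block_seq (map (fval m) ts) /\ admissible (n k) (map (fval m) ts) /\
      (if Nat.even k then in_lq_ball q 1 (map gam ts)
       else in_lq_ball q (Rpower 2 (/ p)) (map gam ts) /\
            (forall t', In t' ts -> exists k', node_index t' = Some k' /\ Nat.even k' = true) /\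
            NoDup (map (node_m m) ts)) /\
      (fix all (ts : list ftree) : Prop :=
         match ts with [] => True | t' :: r => tvalid m n p q NN t' /\ all r end) ts
  end.

Definition functional_tree (m n : nat -> nat) (p q : R) (NN : func -> Prop)
  (x : func) (t : ftree) : Prop :=
  (gam t = 1 \/ gam t = -1) /\ x = (fun i => gam t * fval m t i) /\ tvalid m n p q NN t.

(* terminal nodes beta, listed as pairs (prod_{alpha <= beta} gamma_alpha, j_beta) *)
Fixpoint leaves (t : ftree) : list (R * nat) :=
  match t with
  | Leaf g j => [(g, j)]
  | Node g _ ts => map (fun cj => (g * fst cj, snd cj))
      ((fix go (ts : list ftree) : list (R * nat) :=
          match ts with [] => [] | t' :: r => leaves t' ++ go r end) ts)
  end.

From Stdlib Require Import Reals List Arith Lra Lia Sorting.Sorted.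
Import ListNotations.

(* Along the path a_0 < ... < a_r < b of a terminal node b, the coefficient of e*_(j_b)
   in x* is (prod gamma) / (m_(a_0) ... m_(a_r)) (leaf_coefficient), so b is "large"
   exactly when 2 m_(a_0) ... m_(a_r) <= m_2k (large_coefficient_iff).  Give every node
   index e the cost n_e if e is even and 1 if e is odd.  The growth conditions on M and N
   show that any list of indices with 2 prod m <= m_2k has cost at most p_k - 1
   (cost_bound).  By induction on the tree, the large leaves below a path pi form a set in
   S_(p_k - 1 - cost pi) (large_leaves_schreier): below an even node e the sets of the
   children are glued along an S_(n_e)-admissible family of blocks (Schreier families are
   spreading, and an S_b-admissible union of S_a sets is in S_(a+b)); below an odd node the
   children carry distinct even indices 2i with m_2i <= m_2k, so at most k - 1 of them
   contribute, while all large indices are >= 2k, which is an S_1-admissible family. *)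

Open Scope R_scope.
Open Scope nat_scope.

Lemma Forall2_in_l {A B} (Rel : A -> B -> Prop) l1 l2 x :
  Forall2 Rel l1 l2 -> In x l1 -> exists y, In y l2 /\ Rel x y.
Proof.
  intros H. induction H as [|a b l1 l2 Hab _ IH]; simpl; [intros []|].
  intros [<-|Hx]; [eauto|]. destruct (IH Hx) as [z [? ?]]; eauto.
Qed.

Lemma Forall2_in_r {A B} (Rel : A -> B -> Prop) l1 l2 y :
  Forall2 Rel l1 l2 -> In y l2 -> exists x, In x l1 /\ Rel x y.
Proof.
  intros H. induction H as [|a b l1 l2 Hab _ IH]; simpl; [intros []|].
  intros [<-|Hy]; [eauto|]. destruct (IH Hy) as [z [? ?]]; eauto.
Qed.

Lemma Forall2_with_in {A B} (Rel : A -> B -> Prop) l1 l2 :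
  Forall2 Rel l1 l2 -> Forall2 (fun a b => In a l1 /\ Rel a b) l1 l2.
Proof.
  intros H. induction H; constructor; simpl; auto.
  eapply Forall2_impl; [|exact IHForall2]. simpl. tauto.
Qed.

Lemma Forall_exists_Forall2 {A B} (P : A -> B -> Prop) l :
  Forall (fun a => exists b, P a b) l -> exists l', Forall2 P l l'.
Proof.
  intros H. induction H as [|a l [b Hb] _ [l' Hl']]; [exists []; constructor|].
  exists (b :: l'). constructor; auto.
Qed.

Lemma in_concat_Forall2 {A} (Q : A -> nat -> Prop) ts LL :
  Forall2 (fun u l => forall i, In i l <-> Q u i) ts LL ->
  forall i, In i (concat LL) <-> exists u, In u ts /\ Q u i.
Proof.
  intros H. induction H as [|v l ts LL Hvl _ IH]; simpl; intros i.
  - split; [intros []|intros [u [[] _]]].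
  - rewrite in_app_iff, Hvl, IH. split.
    + intros [H1|[u [H2 H3]]]; eauto.
    + intros [u [[<-|H2] H3]]; eauto.
Qed.

Definition nonnil (l : list nat) : bool := match l with [] => false | _ => true end.

Lemma concat_filter_nonnil (L : list (list nat)) : concat (filter nonnil L) = concat L.
Proof. induction L as [|[|a l] L IH]; simpl; auto. rewrite IH; auto. Qed.

Lemma filter_nonnil_Forall (P : list nat -> Prop) LL :
  Forall P LL -> Forall (fun F => F <> [] /\ P F) (filter nonnil LL).
Proof.
  intros H. induction H as [|[|a l] LL HP _ IH]; simpl; auto.
  constructor; auto. split; [discriminate|auto].
Qed.

Lemma nonnil_count_le {A} (Rel : A -> list nat -> Prop) (f : A -> nat) Sl ts LL :
  Forall2 Rel ts LL -> NoDup (map f ts) ->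
  (forall u l, In u ts -> Rel u l -> l <> [] -> In (f u) Sl) ->
  length (filter nonnil LL) <= length Sl.
Proof.
  intros H HN HS.
  assert (exists D, length D = length (filter nonnil LL) /\ NoDup D /\ incl D Sl /\
                    incl D (map f ts)) as [D [D1 [D2 [D3 _]]]].
  { clear -H HN HS. induction H as [|u l ts LL Hul H IH].
    - exists []. simpl. split; [auto|split; [constructor|split; intros x []]].
    - simpl in HN. apply NoDup_cons_iff in HN. destruct HN as [HN1 HN2].
      destruct IH as [D [D1 [D2 [D3 D4]]]]; auto.
      { intros v l' Hv Hr Hn. apply (HS v l'); simpl; auto. }
      destruct l as [|x l].
      + exists D. simpl. repeat split; auto. intros y Hy. simpl. right; auto.
      + exists (f u :: D). simpl. split; [lia|]. split; [|split].
        * constructor; [intro Hin; apply HN1, D4; auto|auto].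
        * intros y [<-|Hy]; auto. apply (HS u (x :: l)); simpl; auto. discriminate.
        * intros y [<-|Hy]; simpl; auto. }
  rewrite <- D1. apply NoDup_incl_length; auto.
Qed.

Lemma sorted_app_inv (A B : list nat) : StronglySorted lt (A ++ B) ->
  StronglySorted lt A /\ StronglySorted lt B /\ (forall x y, In x A -> In y B -> x < y).
Proof.
  induction A as [|a A IH]; simpl; intros H.
  - repeat split; auto. constructor. intros x y [].
  - apply StronglySorted_inv in H. destruct H as [Hs Hf].
    destruct (IH Hs) as [H4 [H5 H6]]. rewrite Forall_forall in Hf.
    split; [constructor; auto; apply Forall_forall; intros; apply Hf, in_or_app; auto|].
    split; auto. intros x y [<-|Hx] Hy; [apply Hf, in_or_app|]; auto.
Qed.

Lemma sorted_app (A B : list nat) : StronglySorted lt A -> StronglySorted lt B ->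
  (forall x y, In x A -> In y B -> x < y) -> StronglySorted lt (A ++ B).
Proof.
  induction A as [|a A IH]; simpl; intros H1 H2 H3; auto.
  apply StronglySorted_inv in H1. destruct H1 as [Hs Hf]. constructor; [apply IH; auto|].
  apply Forall_forall. intros x Hx. apply in_app_or in Hx. destruct Hx as [Hx|Hx]; auto.
  rewrite Forall_forall in Hf; auto.
Qed.

Lemma sorted_concat_elem (L : list (list nat)) F :
  StronglySorted lt (concat L) -> In F L -> StronglySorted lt F.
Proof.
  induction L as [|G L IH]; simpl; intros H HF; [destruct HF|].
  apply sorted_app_inv in H. destruct H as [H1 [H2 _]]. destruct HF as [<-|HF]; auto.
Qed.

Lemma sorted_hd_le (l : list nat) y : StronglySorted lt l -> In y l -> hd O l <= y.
Proof.
  intros H Hy. destruct l as [|a l]; [destruct Hy|]. simpl.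
  apply StronglySorted_inv in H. destruct H as [_ Hf]. rewrite Forall_forall in Hf.
  destruct Hy as [->|Hy]; [|apply Nat.lt_le_incl]; auto.
Qed.

Lemma sorted_heads (Ls : list (list nat)) :
  StronglySorted lt (concat Ls) -> Forall (fun F => F <> []) Ls ->
  StronglySorted lt (map (hd O) Ls).
Proof.
  induction Ls as [|F Ls IH]; simpl; intros Hs Hn; constructor;
    apply sorted_app_inv in Hs; inversion Hn as [|? ? HF HLs]; subst.
  - apply IH; tauto.
  - destruct Hs as [_ [_ H3]]. apply Forall_forall. intros y Hy.
    apply in_map_iff in Hy. destruct Hy as [G [<- HG]].
    rewrite Forall_forall in HLs. specialize (HLs G HG).
    apply H3; [destruct F; [congruence|simpl; auto]|].
    apply in_concat. exists G. split; auto. destruct G; [congruence|simpl; auto].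
Qed.

(** * Schreier families *)

Lemma schreier_nil (n : nat) : schreier n [].
Proof. destruct n; simpl; auto. Qed.

Lemma schreier_singleton (n j : nat) : 1 <= j -> schreier n [j].
Proof.
  revert j. induction n as [|n IH]; intros j Hj; simpl.
  - right. exists j. auto.
  - right. split; [repeat constructor|].
    exists [[j]]. repeat split; [discriminate| |simpl; lia].
    constructor; [split; [discriminate|auto]|constructor].
Qed.

Lemma schreier_sorted (n : nat) (l : list nat) : schreier n l -> StronglySorted lt l.
Proof.
  destruct n; simpl; intros H.
  - destruct H as [->|[k [_ ->]]]; repeat constructor.
  - destruct H as [->|[H _]]; [constructor|exact H].
Qed.

(* [spread l' l]: [l'] is obtained from a subsequence of [l] by increasing
   its entries.  Schreier families are closed under this operation. *)
Inductive spread : list nat -> list nat -> Prop :=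
| spread_nil : forall l, spread [] l
| spread_take : forall x y l' l, y <= x -> spread l' l -> spread (x :: l') (y :: l)
| spread_skip : forall l' y l, spread l' l -> spread l' (y :: l).

Lemma spread_nil_r (l' : list nat) : spread l' [] -> l' = [].
Proof. intros H; inversion H; auto. Qed.

Lemma spread_app_r (A B l' : list nat) : spread l' (A ++ B) ->
  exists l1 l2, l' = l1 ++ l2 /\ spread l1 A /\ spread l2 B.
Proof.
  revert l'. induction A as [|a A IH]; simpl; intros l' H.
  - exists [], l'. repeat split; auto. constructor.
  - inversion H as [|x y l0 l1 Hle Hd0|l0 y l1 Hd0]; subst.
    + exists [], []. repeat split; constructor.
    + destruct (IH l0 Hd0) as [l1 [l2 [-> [H5 H6]]]].
      exists (x :: l1), l2. repeat split; auto. constructor; auto.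
    + destruct (IH l' Hd0) as [l1 [l2 [-> [H5 H6]]]].
      exists l1, l2. repeat split; auto. apply spread_skip; auto.
Qed.

Lemma spread_concat_r (Fs : list (list nat)) l' : spread l' (concat Fs) ->
  exists Fs', l' = concat Fs' /\ Forall2 spread Fs' Fs.
Proof.
  revert l'. induction Fs as [|F Fs IH]; simpl; intros l' H.
  - apply spread_nil_r in H. subst. exists []. split; auto.
  - apply spread_app_r in H. destruct H as [l1 [l2 [-> [H1 H2]]]].
    destruct (IH l2 H2) as [Fs' [-> H3]]. exists (l1 :: Fs'). split; auto.
Qed.

Lemma spread_head (x : nat) l' l : spread (x :: l') l -> exists y, In y l /\ y <= x.
Proof.
  intros H. remember (x :: l') as L. induction H as [|x' y l0 l1 Hle _ _|l0 y l1 _ IH].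
  - discriminate.
  - injection HeqL; intros; subst. exists y; simpl; auto.
  - destruct (IH HeqL) as [z [Hz Hz']]. exists z; simpl; auto.
Qed.

Lemma schreier_spread (n : nat) (l l' : list nat) :
  schreier n l -> StronglySorted lt l' -> spread l' l -> schreier n l'.
Proof.
  revert l l'. induction n as [|n IH]; intros l l' Hs Hl' Hd; simpl in *.
  - destruct Hs as [->|[k [Hk ->]]].
    + apply spread_nil_r in Hd. auto.
    + inversion Hd as [|x y l0 l1 Hle Hd0|l0 y l1 Hd0]; subst; auto;
        apply spread_nil_r in Hd0; subst; auto. right. exists x. split; auto. lia.
  - destruct Hs as [->|[Hl [Fs [HFs [HF [-> Hlen]]]]]].
    + apply spread_nil_r in Hd. auto.
    + destruct l' as [|x l''] eqn:E; [left; auto|]. right. split; auto.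
      rewrite <- E in *.
      destruct (spread_concat_r _ _ Hd) as [Fs' [Hc HF2]].
      exists (filter nonnil Fs'). split; [|split; [|split]].
      * intro H0. rewrite <- (concat_filter_nonnil Fs'), H0, E in Hc. discriminate.
      * apply filter_nonnil_Forall. apply Forall_forall. intros F HFin.
        destruct (Forall2_in_l _ _ _ _ HF2 HFin) as [G [HG HdG]].
        rewrite Forall_forall in HF. destruct (HF G HG) as [_ HGs].
        apply (IH G F HGs); auto. rewrite Hc in Hl'. eapply sorted_concat_elem; eauto.
      * rewrite concat_filter_nonnil; auto.
      * apply Nat.le_trans with (length Fs').
        { clear. induction Fs' as [|[|a l] L IH]; simpl; lia. }
        rewrite (Forall2_length HF2). eapply Nat.le_trans; [exact Hlen|].
        rewrite E in Hd. destruct (spread_head _ _ _ Hd) as [y [Hy Hy']].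
        rewrite E. simpl. eapply Nat.le_trans; [|exact Hy']. apply sorted_hd_le; auto.
Qed.

Lemma map_eq_concat (f : list nat -> nat) Gs Ls : map f Ls = concat Gs ->
  exists Lss, Ls = concat Lss /\ Forall2 (fun L G => map f L = G) Lss Gs.
Proof.
  revert Ls. induction Gs as [|G Gs IH]; simpl; intros Ls H.
  - destruct Ls; [|discriminate]. exists []. auto.
  - apply map_eq_app in H. destruct H as [L1 [L2 [-> [H1 H2]]]].
    destruct (IH L2 H2) as [Lss [-> H3]]. exists (L1 :: Lss). simpl. auto.
Qed.

Lemma concat_concat (L : list (list (list nat))) :
  concat (concat L) = concat (map (@concat nat) L).
Proof. induction L as [|l L IH]; simpl; auto. rewrite concat_app, IH; auto. Qed.

Lemma schreier_union (b a : nat) (Ls : list (list nat)) :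
  Forall (fun F => F <> [] /\ schreier a F) Ls ->
  StronglySorted lt (concat Ls) -> schreier b (map (hd O) Ls) -> schreier (a + b) (concat Ls).
Proof.
  revert a Ls. induction b as [|b IH]; intros a Ls HF Hs Hb; simpl in Hb.
  - rewrite Nat.add_0_r. destruct Hb as [H|[k [_ H]]].
    + destruct Ls; [apply schreier_nil|discriminate].
    + destruct Ls as [|F [|F' Ls]]; try discriminate. simpl. rewrite app_nil_r.
      inversion HF; subst. tauto.
  - destruct Hb as [H|[Hsort [Gs [HGs [HG [Hc Hlen]]]]]].
    { destruct Ls; [apply schreier_nil|discriminate]. }
    rewrite Nat.add_succ_r. simpl. right. split; auto.
    destruct (map_eq_concat _ _ _ Hc) as [Lss [-> HL]].
    exists (map (@concat nat) Lss). split; [|split; [|split]].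
    + destruct Lss; [inversion HL; subst; congruence|discriminate].
    + apply Forall_forall. intros F HFin. apply in_map_iff in HFin. destruct HFin as [L [<- HL']].
      destruct (Forall2_in_l _ _ _ _ HL HL') as [G [HG' HLG]].
      rewrite Forall_forall in HG. destruct (HG G HG') as [HGn HGsch].
      assert (HFL : Forall (fun F => F <> [] /\ schreier a F) L).
      { rewrite Forall_forall in *. intros F HF'. apply HF. apply in_concat. eauto. }
      split.
      * destruct L as [|F L]; [simpl in HLG; congruence|].
        inversion HFL; subst. simpl. destruct F; [tauto|discriminate].
      * apply IH; auto; [|rewrite HLG; auto].
        rewrite concat_concat in Hs. eapply sorted_concat_elem; eauto. apply in_map; auto.
    + apply concat_concat.
    + rewrite length_map, (Forall2_length HL). eapply Nat.le_trans; [exact Hlen|].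
      destruct Lss as [|L Lss]; [simpl; lia|]. simpl.
      inversion HL as [|? G ? Gs' HLG HL']; subst.
      destruct L as [|F L]; [simpl in *; subst; inversion HG; tauto|].
      simpl. inversion HF as [|? ? [HFn _] _]; subst. destruct F; [tauto|simpl; lia].
Qed.

Lemma concat_singletons (l : list nat) : concat (map (fun x => [x]) l) = l.
Proof. induction l as [|a l IH]; simpl; auto. rewrite IH; auto. Qed.

Lemma schreier_one (l : list nat) : l <> [] -> StronglySorted lt l ->
  (forall x, In x l -> 1 <= x) -> length l <= hd O l -> schreier 1 l.
Proof.
  intros Hn Hs Hp Hl. simpl. right. split; auto.
  exists (map (fun x => [x]) l). split; [destruct l; [congruence|discriminate]|].
  split; [|rewrite concat_singletons, length_map; auto].
  apply Forall_forall. intros F HF. apply in_map_iff in HF. destruct HF as [x [<- Hx]].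
  split; [discriminate|]. right. exists x. auto.
Qed.

(** * Products and sums over multisets of indices *)

Notation mult l x := (count_occ Nat.eq_dec l x).

Definition indicator (y e : nat) : nat := if Nat.eq_dec y e then 1 else 0.

Lemma mult_cons (y : nat) l e : mult (y :: l) e = indicator y e + mult l e.
Proof. unfold indicator. simpl. destruct (Nat.eq_dec y e); lia. Qed.

Lemma nprod_app (A B : list nat) : nprod (A ++ B) = nprod A * nprod B.
Proof. induction A as [|a A IH]; simpl; auto. rewrite IH; lia. Qed.

Lemma nprod_map_mul (f g : nat -> nat) S :
  nprod (map (fun e => f e * g e) S) = nprod (map f S) * nprod (map g S).
Proof. induction S as [|a S IH]; simpl; auto. rewrite IH; lia. Qed.

Lemma sum_map_add (f g : nat -> nat) S :
  list_sum (map (fun e => f e + g e) S) = list_sum (map f S) + list_sum (map g S).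
Proof. induction S as [|a S IH]; simpl; auto. rewrite IH; lia. Qed.

Lemma nprod_indicator (f : nat -> nat) x S : NoDup S -> In x S ->
  nprod (map (fun e => f e ^ indicator x e) S) = f x.
Proof.
  intros HN Hx. unfold indicator. induction S as [|a S IH]; simpl; [destruct Hx|].
  apply NoDup_cons_iff in HN. destruct HN as [HaS HN].
  destruct (Nat.eq_dec x a) as [<-|Hne].
  - rewrite (map_ext_in _ (fun _ => 1)), map_const.
    + simpl. clear. induction S; simpl; lia.
    + intros e He. destruct (Nat.eq_dec x e); [subst; tauto|auto].
  - destruct Hx as [Hx|Hx]; [congruence|]. rewrite IH by auto. simpl; lia.
Qed.

Lemma sum_indicator (f : nat -> nat) x S : NoDup S -> In x S ->
  list_sum (map (fun e => indicator x e * f e) S) = f x.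
Proof.
  intros HN Hx. unfold indicator. induction S as [|a S IH]; simpl; [destruct Hx|].
  apply NoDup_cons_iff in HN. destruct HN as [HaS HN].
  destruct (Nat.eq_dec x a) as [<-|Hne].
  - rewrite (map_ext_in _ (fun _ => 0)), map_const.
    + simpl. clear. induction S; simpl; lia.
    + intros e He. destruct (Nat.eq_dec x e); [subst; tauto|auto].
  - destruct Hx as [Hx|Hx]; [congruence|]. rewrite IH by auto. simpl; lia.
Qed.

Lemma nprod_group (f : nat -> nat) S R : NoDup S -> incl R S ->
  nprod (map f R) = nprod (map (fun e => f e ^ mult R e) S).
Proof.
  intros HN. induction R as [|y R IH]; intros HR; simpl.
  - clear. induction S; simpl in *; lia.
  - rewrite IH by (intros x Hx; apply HR; simpl; auto).
    rewrite (map_ext (fun e => f e ^ mult (y :: R) e)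
               (fun e => f e ^ indicator y e * f e ^ mult R e)).
    2:{ intros e. rewrite mult_cons, Nat.pow_add_r. auto. }
    rewrite nprod_map_mul, nprod_indicator; auto. apply HR; simpl; auto.
Qed.

Lemma sum_group (f : nat -> nat) S R : NoDup S -> incl R S ->
  list_sum (map f R) = list_sum (map (fun e => mult R e * f e) S).
Proof.
  intros HN. induction R as [|y R IH]; intros HR; simpl.
  - clear. induction S; simpl in *; lia.
  - rewrite IH by (intros x Hx; apply HR; simpl; auto).
    rewrite (map_ext (fun e => mult (y :: R) e * f e)
               (fun e => indicator y e * f e + mult R e * f e)).
    2:{ intros e. rewrite mult_cons. lia. }
    rewrite sum_map_add, sum_indicator; auto. apply HR; simpl; auto.
Qed.

Definition other (x : nat) (R : list nat) : list nat :=
  filter (fun b => negb (Nat.eqb x b)) R.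

Lemma nprod_other (f : nat -> nat) x R :
  nprod (map f R) = f x ^ mult R x * nprod (map f (other x R)).
Proof.
  unfold other. induction R as [|y R IH]; simpl; auto.
  destruct (Nat.eq_dec y x), (Nat.eqb_spec x y); subst; simpl; try congruence;
    rewrite IH; lia.
Qed.

Lemma sum_other (f : nat -> nat) x R :
  list_sum (map f R) = mult R x * f x + list_sum (map f (other x R)).
Proof.
  unfold other. induction R as [|y R IH]; simpl; auto.
  destruct (Nat.eq_dec y x), (Nat.eqb_spec x y); subst; simpl; try congruence;
    rewrite IH; lia.
Qed.

Lemma other_all_eq x R : (forall b, In b R -> b = x) -> other x R = [].
Proof.
  unfold other. induction R as [|a R IH]; simpl; intros H; auto.
  rewrite (H a (or_introl eq_refl)), Nat.eqb_refl. apply IH; auto.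
Qed.

Lemma in_other x b R : In b (other x R) -> In b R /\ b <> x.
Proof.
  unfold other. intros H. apply filter_In in H. destruct H as [H1 H2]. split; auto.
  intros ->. rewrite Nat.eqb_refl in H2. discriminate.
Qed.

Lemma nprod_ge1 (l : list nat) : (forall x, In x l -> 1 <= x) -> 1 <= nprod l.
Proof.
  induction l as [|a l IH]; simpl; intros H; auto.
  specialize (IH (fun x Hx => H x (or_intror Hx))). specialize (H a (or_introl eq_refl)). nia.
Qed.

Lemma nprod_ge_elt (l : list nat) x : (forall y, In y l -> 1 <= y) -> In x l -> x <= nprod l.
Proof.
  induction l as [|a l IH]; simpl; intros H Hx; [destruct Hx|].
  assert (1 <= nprod l) by (apply nprod_ge1; auto). assert (Ha := H a (or_introl eq_refl)).
  destruct Hx as [<-|Hx]; [nia|]. specialize (IH (fun y Hy => H y (or_intror Hy)) Hx). nia.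
Qed.

Lemma nprod_first_crossing M (f : nat -> nat) R acc :
  acc < M -> M <= acc * nprod (map f R) ->
  exists R0 x R2, R = R0 ++ x :: R2 /\ acc * nprod (map f R0) < M /\
                  M <= acc * nprod (map f R0) * f x.
Proof.
  revert acc. induction R as [|y R IH]; simpl; intros acc H1 H2; [lia|].
  destruct (le_lt_dec M (acc * f y)).
  - exists [], y, R. simpl. split; auto. split; lia.
  - destruct (IH (acc * f y)) as [R0 [x [R2 [-> [H3 H4]]]]]; [auto|lia|].
    exists (y :: R0), x, R2. simpl. split; auto. split; lia.
Qed.

(** * Growth of the sequences M and N *)

Section Arithmetic.
Variables m n s : nat -> nat.
Hypothesis HMN : MN_conditions m n s.

Lemma m_pos i : 1 <= i -> 1 <= m i.
Proof. intros Hi. apply HMN; auto. Qed.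

Lemma n_pos i : 1 <= i -> 1 <= n i.
Proof. intros Hi. apply HMN; auto. Qed.

Lemma m_1_gt3 : 3 < m 1.
Proof. apply HMN. Qed.

Lemma m_2 : m 2 = m 1 ^ 5.
Proof. apply HMN. Qed.

Lemma m_odd j : 1 <= j -> m (2 * j + 1) = m (2 * j) ^ 5.
Proof. apply HMN. Qed.

Lemma m_even j : 2 <= j -> m (2 * j) = nprod (map (fun i => m (2 * i) ^ s i) (seq 1 (j - 1))).
Proof. apply HMN. Qed.

Lemma n_2 : 5 * n 1 < n 2.
Proof. apply HMN. Qed.

Lemma m_strict_mono a b : 1 <= a -> a < b -> m a < m b.
Proof.
  intros Ha Hab. destruct HMN as [Hm _]. induction Hab as [|b Hab IH].
  - apply Hm; auto.
  - eapply Nat.lt_trans; [exact IH|]. apply Hm. lia.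
Qed.

Lemma m_lt_inv a b : 1 <= a -> 1 <= b -> m a < m b -> a < b.
Proof.
  intros Ha Hb H. destruct (lt_dec a b) as [|Hab]; auto.
  destruct (Nat.eq_dec a b) as [->|]; [lia|].
  pose proof (m_strict_mono b a Hb ltac:(lia)). lia.
Qed.

Lemma m_step k0 : 2 <= k0 -> m (2 * S k0) = m (2 * k0) ^ (s k0 + 1).
Proof.
  intros Hk0. rewrite (m_even (S k0)) by lia.
  replace (S k0 - 1) with (S (k0 - 1)) by lia. rewrite seq_S, map_app, nprod_app.
  replace (1 + (k0 - 1)) with k0 by lia. rewrite <- (m_even k0) by lia.
  cbn [map nprod fold_right]. rewrite Nat.pow_add_r, Nat.pow_1_r. lia.
Qed.

Lemma pk_step k0 : 1 <= k0 -> pk n s (S k0) = pk n s k0 + s k0 * n (2 * k0).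
Proof.
  intros Hk0. unfold pk. replace (S k0 - 1) with (S (k0 - 1)) by lia.
  rewrite seq_S, map_app, list_sum_app. replace (1 + (k0 - 1)) with k0 by lia. simpl. lia.
Qed.

(* "Basic" indices are 1 and the even indices; every m_e is a product of basic ones. *)
Definition basic (b : nat) : Prop := b = 1 \/ exists i, 1 <= i /\ b = 2 * i.

Lemma basic_pos b : basic b -> 1 <= b.
Proof. intros [->|[i [Hi ->]]]; lia. Qed.

Lemma nprod_basic_ge1 B : (forall b, In b B -> basic b) -> 1 <= nprod (map m B).
Proof.
  intros HB. apply nprod_ge1. intros y Hy. apply in_map_iff in Hy.
  destruct Hy as [b [<- Hb]]. apply m_pos, basic_pos, HB; auto.
Qed.

Lemma basic_below k B i : 1 <= k -> (forall b, In b B -> basic b) ->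
  nprod (map m B) < m (2 * k) -> In (2 * i) B -> 1 <= i -> i < k.
Proof.
  intros Hk HB Hp Hb Hi.
  assert (m (2 * i) <= nprod (map m B)).
  { apply nprod_ge_elt; [|apply in_map; auto]. intros y Hy. apply in_map_iff in Hy.
    destruct Hy as [b [<- Hb']]. apply m_pos, basic_pos, HB; auto. }
  assert (2 * i < 2 * k) by (apply m_lt_inv; lia). lia.
Qed.

Definition low_index (j b : nat) : Prop := b = 1 \/ exists i, 1 <= i /\ i <= j - 1 /\ b = 2 * i.

Definition low_indices (j : nat) : list nat := 1 :: map (fun i => 2 * i) (seq 1 (j - 1)).

Lemma low_indices_nodup j : NoDup (low_indices j).
Proof.
  constructor.
  - intros H. apply in_map_iff in H. destruct H as [i [H _]]. lia.
  - apply NoDup_map_NoDup_ForallPairs; [intros x y _ _ H; lia|apply seq_NoDup].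
Qed.

(* The condition 4 f_j < n_(2j), read for multisets of low indices. *)
Lemma sum_n_below_m j R : 2 <= j -> (forall b, In b R -> low_index j b) ->
  nprod (map m R) < m (2 * j) -> 4 * list_sum (map n R) < n (2 * j).
Proof.
  intros Hj HR Hp.
  assert (HS : incl R (low_indices j)).
  { intros x Hx. destruct (HR x Hx) as [->|[i [H1 [H2 ->]]]]; simpl; auto.
    right. apply in_map_iff. exists i. split; [lia|]. apply in_seq. lia. }
  rewrite (nprod_group m _ R (low_indices_nodup j) HS) in Hp.
  rewrite (sum_group n _ R (low_indices_nodup j) HS).
  unfold low_indices in *. simpl in *. rewrite map_map in *.
  destruct HMN as [_ [_ [_ [_ [_ [_ [_ [Hf _]]]]]]]].
  pose proof (Hf j (mult R 1) (fun i => mult R (2 * i)) Hj) as H. simpl in H. lia.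
Qed.

Lemma sum_n_below_m_pow j d R : 2 <= j -> 1 <= d -> (forall b, In b R -> low_index j b) ->
  nprod (map m R) < m (2 * j) ^ d -> 4 * list_sum (map n R) < (2 * d - 1) * n (2 * j).
Proof.
  intros Hj. revert R. induction d as [|d IH]; intros R Hd HR Hp; [lia|].
  assert (Hm1 : m 1 < m (2 * j)) by (apply m_strict_mono; lia).
  assert (HM : forall b, In b R -> m b < m (2 * j)).
  { intros b Hb. destruct (HR b Hb) as [->|[i [H1 [H2 ->]]]]; auto. apply m_strict_mono; lia. }
  destruct (lt_dec (nprod (map m R)) (m (2 * j))) as [Hlt|Hge].
  { pose proof (sum_n_below_m j R Hj HR Hlt). nia. }
  assert (Hd' : 1 <= d) by (destruct d; [rewrite Nat.pow_1_r in Hp; lia|lia]).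
  assert (H1M : 1 < m (2 * j)) by (pose proof m_1_gt3; lia).
  destruct (nprod_first_crossing (m (2 * j)) m R 1 H1M ltac:(lia)) as [R0 [x [R2 [-> [H3 H4]]]]].
  rewrite map_app in Hp. simpl in Hp. rewrite nprod_app in Hp. simpl in Hp.
  rewrite Nat.mul_1_l in H3, H4.
  assert (HR2 : nprod (map m R2) < m (2 * j) ^ d).
  { apply (Nat.mul_lt_mono_pos_l (m (2 * j))); [lia|].
    eapply Nat.le_lt_trans; [|exact Hp]. rewrite Nat.mul_assoc. apply Nat.mul_le_mono_r; auto. }
  assert (A1 := IH R2 Hd' (fun b Hb => HR b ltac:(apply in_or_app; right; right; auto)) HR2).
  assert (A2 := sum_n_below_m j R0 Hj (fun b Hb => HR b ltac:(apply in_or_app; left; auto)) H3).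
  assert (A3 := sum_n_below_m j [x] Hj
    (fun b Hb => HR b ltac:(destruct Hb as [<-|[]]; apply in_or_app; right; left; auto))
    ltac:(simpl; rewrite Nat.mul_1_r; apply HM; apply in_or_app; right; left; auto)).
  rewrite map_app, list_sum_app. simpl in *. nia.
Qed.

Lemma basic_cost_bound_1 B : (forall b, In b B -> basic b) ->
  nprod (map m B) < m 2 -> list_sum (map n B) <= pk n s 1 - 1.
Proof.
  intros HB Hp.
  assert (Hall : forall b, In b B -> b = 1).
  { intros b Hb. destruct (HB b Hb) as [->|[i [Hi ->]]]; auto.
    pose proof (basic_below 1 B i ltac:(lia) HB Hp Hb Hi). lia. }
  rewrite (nprod_other m 1), other_all_eq in Hp by auto.
  rewrite (sum_other n 1), other_all_eq by auto.
  simpl in Hp. rewrite Nat.mul_1_r, m_2 in Hp.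
  apply Nat.pow_lt_mono_r_iff in Hp; [|pose proof m_1_gt3; lia].
  unfold pk. simpl. pose proof (n_pos 1 ltac:(lia)). nia.
Qed.

(* k = 2, where m_4 = m_1^(5 s_1). *)
Lemma basic_cost_bound_2 B : (forall b, In b B -> basic b) ->
  nprod (map m B) < m 4 -> list_sum (map n B) <= pk n s 2 - 1.
Proof.
  intros HB Hp.
  assert (Hall : forall b, In b (other 1 B) -> b = 2).
  { intros b Hb. apply in_other in Hb. destruct Hb as [Hb Hb1].
    destruct (HB b Hb) as [->|[i [Hi ->]]]; [lia|].
    pose proof (basic_below 2 B i ltac:(lia) HB Hp Hb Hi). lia. }
  rewrite (nprod_other m 1), (nprod_other m 2 (other 1 B)),
    (other_all_eq 2 (other 1 B)) in Hp by auto.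
  rewrite (sum_other n 1), (sum_other n 2 (other 1 B)), (other_all_eq 2 (other 1 B)) by auto.
  assert (H4 := m_even 2 ltac:(lia)). simpl in H4. rewrite m_2 in H4.
  simpl in Hp. rewrite Nat.mul_1_r, m_2 in Hp.
  rewrite H4, <- !Nat.pow_mul_r, <- Nat.pow_add_r, Nat.mul_1_r in Hp.
  apply Nat.pow_lt_mono_r_iff in Hp; [|pose proof m_1_gt3; lia].
  unfold pk. simpl. pose proof (n_pos 1 ltac:(lia)). pose proof n_2. nia.
Qed.

(* Induction step k0 -> k0 + 1 for k0 >= 2, where m_(2k0+2) = m_(2k0)^(s_k0 + 1):
   split off the copies of the index 2k0. *)
Lemma basic_cost_bound_step k0 : 2 <= k0 ->
  (forall B, (forall b, In b B -> basic b) ->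
     nprod (map m B) < m (2 * k0) -> list_sum (map n B) <= pk n s k0 - 1) ->
  forall B, (forall b, In b B -> basic b) ->
  nprod (map m B) < m (2 * S k0) -> list_sum (map n B) <= pk n s (S k0) - 1.
Proof.
  intros Hk0 IH B HB Hp. rewrite pk_step by lia.
  set (R := other (2 * k0) B).
  assert (HR : forall b, In b R -> basic b /\ low_index k0 b).
  { intros b Hb. apply in_other in Hb. destruct Hb as [Hb Hbne]. split; auto.
    destruct (HB b Hb) as [->|[i [Hi ->]]]; [left; auto|]. right. exists i.
    pose proof (basic_below (S k0) B i ltac:(lia) HB Hp Hb Hi). lia. }
  rewrite (nprod_other m (2 * k0)), m_step in Hp by lia. fold R in Hp.
  rewrite (sum_other n (2 * k0)). fold R.
  set (c := mult B (2 * k0)) in *. set (M := m (2 * k0)) in *.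
  assert (HM1 : 1 < M) by (pose proof (m_strict_mono 1 (2 * k0)); pose proof m_1_gt3; lia).
  assert (HPR : 1 <= nprod (map m R)) by (apply nprod_basic_ge1; intros; apply HR; auto).
  assert (Hc : c <= s k0).
  { destruct (le_lt_dec c (s k0)); auto.
    assert (M ^ (s k0 + 1) <= M ^ c) by (apply Nat.pow_le_mono_r; lia). nia. }
  assert (Hpk0 : 1 <= pk n s k0) by (unfold pk; pose proof (n_pos 1); lia).
  replace (s k0 + 1) with (c + (s k0 + 1 - c)) in Hp by lia.
  rewrite Nat.pow_add_r in Hp.
  apply Nat.mul_lt_mono_pos_l in Hp; [|apply Nat.neq_0_lt_0, Nat.pow_nonzero; lia].
  destruct (Nat.eq_dec c (s k0)) as [Heq|Hne].
  - (* all s_k0 copies used: the rest lies below m_(2k0) *)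
    replace (s k0 + 1 - c) with 1 in Hp by lia. rewrite Nat.pow_1_r in Hp.
    pose proof (IH R (fun b Hb => proj1 (HR b Hb)) Hp). rewrite Heq. lia.
  - (* d = s_k0 + 1 - c >= 2 factors m_(2k0) are left for the low indices *)
    assert (A := sum_n_below_m_pow k0 (s k0 + 1 - c) R Hk0 ltac:(lia)
                   (fun b Hb => proj2 (HR b Hb)) Hp).
    assert (list_sum (map n R) < (s k0 - c) * n (2 * k0)).
    { replace (2 * (s k0 + 1 - c) - 1) with (2 * (s k0 - c) + 1) in A by lia. nia. }
    nia.
Qed.

Lemma basic_cost_bound k B : 1 <= k -> (forall b, In b B -> basic b) ->
  nprod (map m B) < m (2 * k) -> list_sum (map n B) <= pk n s k - 1.
Proof.
  intros Hk. revert B. induction k as [|k IH]; [lia|].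
  destruct k as [|[|k']].
  - apply basic_cost_bound_1.
  - apply basic_cost_bound_2.
  - apply basic_cost_bound_step; [lia|]. apply IH. lia.
Qed.

Definition node_cost (e : nat) : nat := if Nat.even e then n e else 1.

Definition cost (l : list nat) : nat := list_sum (map node_cost l).
Definition prodm (l : list nat) : nat := nprod (map m l).

Lemma cost_app l1 l2 : cost (l1 ++ l2) = cost l1 + cost l2.
Proof. unfold cost. rewrite map_app, list_sum_app. auto. Qed.

Lemma cost_single e : cost [e] = node_cost e.
Proof. unfold cost. simpl. lia. Qed.

Lemma prodm_pos l : (forall e, In e l -> 1 <= e) -> 1 <= prodm l.
Proof.
  intros H. apply nprod_ge1. intros y Hy. apply in_map_iff in Hy.
  destruct Hy as [e [<- He]]. apply m_pos; auto.
Qed.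

(* Splitting an index into basic ones: m_(2j+1) = m_(2j)^5, other indices are kept. *)
Definition basic_split (e : nat) : list nat :=
  if Nat.even e then [e] else if Nat.eqb e 1 then [1] else repeat (e - 1) 5.

Lemma basic_split_spec e : 1 <= e ->
  (forall b, In b (basic_split e) -> basic b) /\ m e = nprod (map m (basic_split e)) /\
  node_cost e <= list_sum (map n (basic_split e)).
Proof.
  intros He. unfold basic_split, node_cost. destruct (Nat.even e) eqn:Ee.
  - apply Nat.even_spec in Ee. destruct Ee as [j ->]. simpl.
    split; [|split; lia]. intros b [<-|[]]. right. exists j; split; lia.
  - assert (Ho : Nat.odd e = true) by (rewrite <- Nat.negb_even, Ee; auto).
    apply Nat.odd_spec in Ho. destruct Ho as [j ->].
    destruct (Nat.eqb_spec (2 * j + 1) 1) as [E1|E1].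
    + rewrite E1. simpl. pose proof (n_pos 1). split; [|split; lia].
      intros b [<-|[]]. left; auto.
    + replace (2 * j + 1 - 1) with (2 * j) by lia. split; [|split].
      * intros b Hb. apply repeat_spec in Hb. subst. right. exists j; split; lia.
      * rewrite m_odd by lia. simpl. lia.
      * pose proof (n_pos (2 * j) ltac:(lia)). simpl in *. lia.
Qed.

Lemma cost_bound k pi : 1 <= k -> (forall e, In e pi -> 1 <= e) ->
  2 * prodm pi <= m (2 * k) -> cost pi <= pk n s k - 1.
Proof.
  intros Hk Hpi Hp.
  set (B := concat (map basic_split pi)).
  assert (HB : (forall b, In b B -> basic b) /\ prodm pi = nprod (map m B) /\
               cost pi <= list_sum (map n B)).
  { unfold B, prodm, cost. clear Hp. induction pi as [|e pi IH]; simpl.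
    - split; [intros b []|]. auto.
    - destruct (basic_split_spec e (Hpi e (or_introl eq_refl))) as [H1 [H2 H3]].
      destruct IH as [I1 [I2 I3]]; [intros; apply Hpi; simpl; auto|].
      split; [intros b Hb; apply in_app_or in Hb; destruct Hb; auto|].
      rewrite map_app, nprod_app, <- H2, <- I2, map_app, list_sum_app. split; [auto|lia]. }
  destruct HB as [H1 [H2 H3]].
  eapply Nat.le_trans; [exact H3|]. apply basic_cost_bound; auto.
  pose proof (nprod_basic_ge1 B H1). lia.
Qed.

End Arithmetic.

(** * Functional trees *)

Fixpoint ftree_nested_ind (P : ftree -> Prop) (HL : forall g j, P (Leaf g j))
  (HN : forall g k ts, Forall P ts -> P (Node g k ts)) (t : ftree) : P t :=
  match t with
  | Leaf g j => HL g j
  | Node g k ts => HN g k ts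
      ((fix go (ts : list ftree) : Forall P ts :=
         match ts with
         | [] => Forall_nil _
         | t' :: r => Forall_cons _ (ftree_nested_ind P HL HN t') (go r)
         end) ts)
  end.

(* Terminal nodes together with their path: ((prod gamma, j_beta), [k_alpha; alpha < beta]),
   the node indices listed from the root down. *)
Fixpoint leaf_paths (t : ftree) : list (R * nat * list nat) :=
  match t with
  | Leaf g j => [((g, j), [])]
  | Node g k ts => map (fun x => ((g * fst (fst x))%R, snd (fst x), k :: snd x))
      ((fix go (ts : list ftree) : list (R * nat * list nat) :=
          match ts with [] => [] | t' :: r => leaf_paths t' ++ go r end) ts)
  end.

Lemma leaf_paths_node g k ts : leaf_paths (Node g k ts) =
  map (fun x => ((g * fst (fst x))%R, snd (fst x), k :: snd x)) (concat (map leaf_paths ts)).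
Proof. simpl. f_equal. induction ts as [|t ts IH]; simpl; auto. rewrite IH; auto. Qed.

Lemma leaves_node g k ts : leaves (Node g k ts) =
  map (fun cj => ((g * fst cj)%R, snd cj)) (concat (map leaves ts)).
Proof. simpl. f_equal. induction ts as [|t ts IH]; simpl; auto. rewrite IH; auto. Qed.

Lemma leaves_leaf_paths t : leaves t = map fst (leaf_paths t).
Proof.
  induction t as [g j|g k ts IH] using ftree_nested_ind; [reflexivity|].
  rewrite leaves_node, leaf_paths_node, map_map.
  rewrite (map_ext_in leaves (fun u => map fst (leaf_paths u)) ts).
  2:{ intros u Hu. rewrite Forall_forall in IH. auto. }
  rewrite <- (map_map leaf_paths (map fst)), <- concat_map, map_map. reflexivity.
Qed.

Lemma leaf_paths_node_path g e ts c i pa :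
  In ((c, i), pa) (leaf_paths (Node g e ts)) -> exists pa', pa = e :: pa'.
Proof.
  rewrite leaf_paths_node. intros Hin. apply in_map_iff in Hin.
  destruct Hin as [x [Heq _]]. injection Heq; intros; subst. eauto.
Qed.

Lemma successive_cons x xs : successive (x :: xs) ->
  successive xs /\ (forall y, In y xs -> forall i j, x i <> 0%R -> y j <> 0%R -> i < j).
Proof.
  intros H. split.
  - intros a b i j Hab. apply (H (S a) (S b) i j). simpl. lia.
  - intros y Hy i j Hi Hj. destruct (In_nth xs y zerof Hy) as [b [Hb Hb']].
    apply (H 0 (S b) i j); [simpl; lia|auto|simpl; rewrite Hb'; auto].
Qed.

Section Tree.
Variables (m n s : nat -> nat) (p q : R) (NN : func -> Prop).
Hypothesis HMN : MN_conditions m n s.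

Definition fsum (ts : list ftree) (i : nat) : R :=
  fold_right (fun t' acc => (gam t' * fval m t' i + acc)%R) 0%R ts.

Lemma fval_node g k ts i : fval m (Node g k ts) i = (/ INR (m k) * fsum ts i)%R.
Proof. reflexivity. Qed.

Lemma tvalid_node g k ts : tvalid m n p q NN (Node g k ts) ->
  g <> 0%R /\ 1 <= k /\ successive (map (fval m) ts) /\ admissible (n k) (map (fval m) ts) /\
  (Nat.even k = false ->
     (forall t', In t' ts -> exists k', node_index t' = Some k' /\ Nat.even k' = true) /\
     NoDup (map (node_m m) ts)) /\
  Forall (tvalid m n p q NN) ts.
Proof.
  simpl. intros [H1 [H2 [_ [_ [[_ H5] [H6 [H7 H8]]]]]]].
  do 4 (split; auto). split; [intros Hodd; rewrite Hodd in H7; tauto|].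
  clear -H8. induction ts as [|t ts IH]; auto. destruct H8. constructor; auto.
Qed.

Lemma fsum_zero ts j : (forall u, In u ts -> fval m u j = 0%R) -> fsum ts j = 0%R.
Proof.
  induction ts as [|v ts IH]; simpl; intros H; auto.
  rewrite H, IH by auto. ring.
Qed.

(* In a block sequence, a coordinate is seen by at most one successor. *)
Lemma fsum_single ts u j : successive (map (fval m) ts) -> In u ts -> fval m u j <> 0%R ->
  fsum ts j = (gam u * fval m u j)%R.
Proof.
  induction ts as [|v ts IH]; intros Hs Hu Hj; [destruct Hu|]. simpl in Hs |- *.
  apply successive_cons in Hs. destruct Hs as [Hs1 Hs2].
  assert (Hothers : fval m v j <> 0%R -> fsum ts j = 0%R).
  { intros Hv. apply fsum_zero. intros w Hw. destruct (Req_dec (fval m w j) 0); auto.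
    pose proof (Hs2 (fval m w) (in_map _ _ _ Hw) j j Hv H). lia. }
  destruct (Req_dec (fval m v j) 0) as [Hv|Hv].
  - rewrite Hv. destruct Hu as [<-|Hu]; [congruence|]. rewrite IH; auto. ring.
  - rewrite Hothers by auto. destruct Hu as [<-|Hu]; [ring|].
    pose proof (Hs2 (fval m u) (in_map _ _ _ Hu) j j Hv Hj). lia.
Qed.

Lemma weighted_coefficient_nonzero (a c P : R) : (a = c / P -> c <> 0 -> 1 <= P -> a <> 0)%R.
Proof.
  intros -> Hc HP H0. apply Hc.
  replace c with (c / P * P)%R by (field; lra). rewrite H0. ring.
Qed.

Lemma leaf_coefficient t : tvalid m n p q NN t -> forall c j pa, In ((c, j), pa) (leaf_paths t) ->
  (gam t * fval m t j = c / INR (prodm m pa))%R /\ c <> 0%R /\ (forall e, In e pa -> 1 <= e).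
Proof.
  induction t as [g j|g k ts IH] using ftree_nested_ind.
  - intros Hv c j' pa Hin. simpl in Hin. destruct Hin as [Hin|[]].
    injection Hin; intros; subst. simpl in Hv. destruct Hv as [Hg _].
    simpl. unfold ev. rewrite Nat.eqb_refl. unfold prodm. simpl.
    split; [field|split; [auto|intros e []]].
  - intros Hv c j pa Hin.
    apply tvalid_node in Hv. destruct Hv as [Hg [Hk [Hsucc [_ [_ Hall]]]]].
    rewrite leaf_paths_node in Hin. apply in_map_iff in Hin.
    destruct Hin as [[[c' j'] pa'] [Heq Hin]]. simpl in Heq. injection Heq; intros; subst.
    apply in_concat in Hin. destruct Hin as [L [HL Hin]]. apply in_map_iff in HL.
    destruct HL as [u [<- Hu]]. rewrite Forall_forall in IH, Hall.
    destruct (IH u Hu (Hall u Hu) c' j pa' Hin) as [H1 [H2 H3]].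
    assert (HP := prodm_pos m n s HMN pa' H3). apply le_INR in HP. simpl in HP.
    assert (Hmk : (1 <= INR (m k))%R) by (apply (le_INR 1), (m_pos m n s HMN); auto).
    assert (Hf : fval m u j <> 0%R).
    { intro H0. rewrite H0, Rmult_0_r in H1.
      exact (weighted_coefficient_nonzero _ _ _ H1 H2 HP eq_refl). }
    change (gam (Node g k ts)) with g. rewrite fval_node, (fsum_single ts u j Hsucc Hu Hf).
    unfold prodm. simpl. fold (prodm m pa'). rewrite mult_INR.
    split; [|split; [intro H0; apply Rmult_integral in H0; tauto|intros e [<-|He]; auto]].
    rewrite <- Rmult_assoc, <- (Rmult_comm (/ INR (m k))), Rmult_assoc, H1. field. lra.
Qed.

Lemma leaf_fval_nonzero t c j pa : tvalid m n p q NN t ->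
  In ((c, j), pa) (leaf_paths t) -> fval m t j <> 0%R.
Proof.
  intros Hv Hin H0. destruct (leaf_coefficient t Hv c j pa Hin) as [H1 [H2 H3]].
  rewrite H0, Rmult_0_r in H1. assert (HP := prodm_pos m n s HMN pa H3).
  apply le_INR in HP. exact (weighted_coefficient_nonzero _ _ _ H1 H2 HP eq_refl).
Qed.

End Tree.

(** * Large leaves form a Schreier set *)

Section LargeLeaves.
Variables (m n s : nat -> nat) (p q : R) (NN : func -> Prop) (K : nat).
Hypothesis HMN : MN_conditions m n s.
Hypothesis HK : 1 <= K.

Notation tvalid := (tvalid m n p q NN).

Definition large (t : ftree) (pi : list nat) (i : nat) : Prop :=
  exists c pa, In ((c, i), pa) (leaf_paths t) /\
    2 * prodm m (pi ++ pa) <= m (2 * K) /\ 2 * K <= i.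

(* the Schreier order still available below the path [pi] *)
Definition budget (pi : list nat) : nat := pk n s K - 1 - cost n pi.

Lemma large_node_iff g e ts pi i :
  large (Node g e ts) pi i <-> exists u, In u ts /\ large u (pi ++ [e]) i.
Proof.
  unfold large. rewrite leaf_paths_node. split.
  - intros [c [pa [Hin [H1 H2]]]]. apply in_map_iff in Hin.
    destruct Hin as [[[c' i'] pa'] [Heq Hin]]. simpl in Heq. injection Heq; intros; subst.
    apply in_concat in Hin. destruct Hin as [L [HL Hin]]. apply in_map_iff in HL.
    destruct HL as [u [<- Hu]]. exists u. split; auto.
    exists c', pa'. rewrite <- app_assoc. auto.
  - intros [u [Hu [c [pa [Hin [H1 H2]]]]]]. exists (g * c)%R, (e :: pa).
    rewrite <- app_assoc in H1. split; auto.
    apply in_map_iff. exists ((c, i), pa). split; auto.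
    apply in_concat. exists (leaf_paths u). split; auto. apply in_map; auto.
Qed.

Lemma large_fval_nonzero t pi i : tvalid t -> large t pi i -> fval m t i <> 0%R.
Proof. intros Hv [c [pa [Hin _]]]. eapply leaf_fval_nonzero; eauto. Qed.

Lemma large_node_cost g e ts pi i : (forall e', In e' pi -> 1 <= e') ->
  tvalid (Node g e ts) -> large (Node g e ts) pi i -> cost n (pi ++ [e]) <= pk n s K - 1.
Proof.
  intros Hpi Hv [c [pa [Hin [Hp _]]]].
  destruct (leaf_paths_node_path _ _ _ _ _ _ Hin) as [pa' ->].
  destruct (leaf_coefficient m n s p q NN HMN _ Hv c i _ Hin) as [_ [_ Hpa]].
  assert (Hc := cost_bound m n s HMN K (pi ++ e :: pa') HK
    ltac:(intros e' H; apply in_app_or in H; destruct H; auto) Hp).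
  replace (pi ++ e :: pa') with ((pi ++ [e]) ++ pa') in Hc by (rewrite <- app_assoc; auto).
  rewrite cost_app in Hc. lia.
Qed.

Lemma large_leaf_schreier g j pi : tvalid (Leaf g j) ->
  exists l, schreier (budget pi) l /\ forall i, In i l <-> large (Leaf g j) pi i.
Proof.
  intros [_ [Hj _]]. unfold large. cbn [leaf_paths].
  destruct (le_dec (2 * prodm m (pi ++ [])) (m (2 * K))) as [H1|H1];
    [destruct (le_dec (2 * K) j) as [H2|H2]|].
  - exists [j]. split; [apply schreier_singleton; auto|]. intros i. split.
    + intros [<-|[]]. exists g, []. split; [left; reflexivity|auto].
    + intros [c [pa [[Heq|[]] _]]]. injection Heq; intros; subst. now left.
  - exists []. split; [apply schreier_nil|]. intros i. split; [intros []|].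
    intros [c [pa [[Heq|[]] [_ H3]]]]. injection Heq; intros; subst. tauto.
  - exists []. split; [apply schreier_nil|]. intros i. split; [intros []|].
    intros [c [pa [[Heq|[]] [H3 _]]]]. injection Heq; intros; subst. tauto.
Qed.

Lemma children_sorted ts LL : successive (map (fval m) ts) ->
  Forall2 (fun u l => StronglySorted lt l /\ forall i, In i l -> fval m u i <> 0%R) ts LL ->
  StronglySorted lt (concat LL).
Proof.
  intros Hs H. induction H as [|u l ts LL [Hl1 Hl2] H IH]; simpl; [constructor|].
  simpl in Hs. apply successive_cons in Hs. destruct Hs as [Hs1 Hs2].
  apply sorted_app; auto. intros x y Hx Hy.
  apply in_concat in Hy. destruct Hy as [l' [Hl' Hy]].
  destruct (Forall2_in_r _ _ _ _ (Forall2_with_in _ _ _ H) Hl') as [v [Hv [_ [_ Hv2]]]].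
  apply (Hs2 (fval m v) (in_map _ _ _ Hv) x y); auto.
Qed.

Lemma heads_spread ts LL :
  Forall2 (fun u l => forall i, In i l -> fval m u i <> 0%R) ts LL ->
  forall la, length la = length ts ->
  (forall a, a < length ts -> is_min_supp (nth a (map (fval m) ts) zerof) (nth a la O)) ->
  spread (map (hd O) (filter nonnil LL)) la.
Proof.
  intros H. induction H as [|u l ts LL Hul H IH]; intros la Hl Hmin; [constructor|].
  destruct la as [|y la]; [discriminate|]. simpl in Hl.
  assert (Hy : is_min_supp (fval m u) y) by (apply (Hmin 0); simpl; lia).
  assert (Hrest : spread (map (hd O) (filter nonnil LL)) la).
  { apply IH; [lia|]. intros a Ha. apply (Hmin (S a)). simpl; lia. }
  destruct l as [|x l]; simpl; [apply spread_skip; auto|].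
  apply spread_take; auto. destruct (le_lt_dec y x); auto.
  exfalso. apply (Hul x); [simpl; auto|]. apply Hy; auto.
Qed.

Lemma even_node_heads e ts LL : admissible (n e) (map (fval m) ts) ->
  Forall2 (fun u l => forall i, In i l -> fval m u i <> 0%R) ts LL ->
  StronglySorted lt (concat LL) ->
  schreier (n e) (map (hd O) (filter nonnil LL)).
Proof.
  intros [la [Hla1 [Hla2 Hla3]]] Hsupp Hsort. rewrite length_map in Hla1, Hla2.
  apply (schreier_spread _ _ _ Hla3); [|apply (heads_spread ts); auto].
  apply sorted_heads; [rewrite concat_filter_nonnil; auto|].
  eapply Forall_impl; [|apply filter_nonnil_Forall, Forall_forall; intros; exact I].
  simpl; tauto.
Qed.

Lemma large_below_even_index g e' ts pi i : (forall e, In e pi -> 1 <= e) ->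
  tvalid (Node g e' ts) -> Nat.even e' = true -> large (Node g e' ts) pi i ->
  exists i', e' = 2 * i' /\ 1 <= i' <= K - 1.
Proof.
  intros Hpi Hv Heven [c [pa [Hin [Hp _]]]].
  destruct (leaf_paths_node_path _ _ _ _ _ _ Hin) as [pa' ->].
  destruct (leaf_coefficient m n s p q NN HMN _ Hv c i _ Hin) as [_ [_ Hpa]].
  assert (He'1 : 1 <= e') by (apply Hpa; simpl; auto).
  assert (Hle : m e' <= prodm m (pi ++ e' :: pa')).
  { apply nprod_ge_elt; [|apply in_map, in_or_app; simpl; auto].
    intros y Hy. apply in_map_iff in Hy. destruct Hy as [z [<- Hz]].
    apply (m_pos m n s HMN). apply in_app_or in Hz. destruct Hz; auto. }
  assert (Hlt : e' < 2 * K).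
  { pose proof (m_pos m n s HMN e' He'1). apply (m_lt_inv m n s HMN); lia. }
  apply Nat.even_spec in Heven. destruct Heven as [i' ->]. exists i'. lia.
Qed.

(* Below an odd node the children carry distinct even indices 2i, i < K, when they
   contribute large leaves: at most K - 1 children contribute. *)
Lemma odd_node_contributors pi ts LL : (forall e, In e pi -> 1 <= e) ->
  (forall t', In t' ts -> exists k', node_index t' = Some k' /\ Nat.even k' = true) ->
  NoDup (map (node_m m) ts) -> Forall tvalid ts ->
  Forall2 (fun u l => forall i, In i l <-> large u pi i) ts LL ->
  length (filter nonnil LL) <= K - 1.
Proof.
  intros Hpi Heven HND Hall HLL.
  replace (K - 1) with (length (map (fun i => m (2 * i)) (seq 1 (K - 1))))
    by (rewrite length_map, length_seq; auto).
  apply (nonnil_count_le _ (node_m m) _ ts LL (Forall2_with_in _ _ _ HLL) HND).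
  intros u [|i l] Hu [_ Hl] Hnil; [congruence|].
  destruct (Heven u Hu) as [e' [Hidx He']].
  destruct u as [g' j'|g' e'' ts']; [discriminate|]. simpl in Hidx. injection Hidx as ->.
  rewrite Forall_forall in Hall.
  destruct (large_below_even_index g' e' ts' pi i) as [i' [-> Hi']]; auto.
  { apply Hl. simpl; auto. }
  apply in_map_iff. exists i'. split; auto. apply in_seq. lia.
Qed.

(* Odd node: at most K - 1 contributing children, and every large index is >= 2K,
   so the first elements of the children lists form an S_1 set. *)
Lemma odd_node_heads pi ts LL : (forall e, In e pi -> 1 <= e) ->
  (forall t', In t' ts -> exists k', node_index t' = Some k' /\ Nat.even k' = true) ->
  NoDup (map (node_m m) ts) -> Forall tvalid ts ->
  Forall2 (fun u l => forall i, In i l <-> large u pi i) ts LL ->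
  StronglySorted lt (concat LL) -> concat LL <> [] ->
  schreier 1 (map (hd O) (filter nonnil LL)).
Proof.
  intros Hpi Heven HND Hall HLL Hsort Hne.
  assert (Hlen := odd_node_contributors pi ts LL Hpi Heven HND Hall HLL).
  set (Ls := filter nonnil LL) in *.
  assert (Hhd : forall x, In x (map (hd O) Ls) -> 2 * K <= x).
  { intros x Hx. apply in_map_iff in Hx. destruct Hx as [F [<- HF]].
    apply filter_In in HF. destruct HF as [HF Hnn].
    destruct F as [|y F]; [discriminate Hnn|]. simpl.
    assert (Hy : exists u, In u ts /\ large u pi y).
    { apply (in_concat_Forall2 _ ts LL HLL). apply in_concat. exists (y :: F); simpl; auto. }
    destruct Hy as [u [_ [c [pa [_ [_ H]]]]]]. auto. }
  assert (HLs : Ls <> []).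
  { intros H0. apply Hne. rewrite <- concat_filter_nonnil. fold Ls. rewrite H0. auto. }
  apply schreier_one.
  - destruct Ls; [congruence|discriminate].
  - apply sorted_heads; [unfold Ls; rewrite concat_filter_nonnil; auto|].
    eapply Forall_impl; [|apply filter_nonnil_Forall, Forall_forall; intros; exact I].
    simpl; tauto.
  - intros x Hx. specialize (Hhd x Hx). lia.
  - rewrite length_map. destruct Ls as [|F Ls'] eqn:EL; [congruence|].
    specialize (Hhd (hd O F) ltac:(simpl; auto)). simpl in *. lia.
Qed.

Lemma large_node_schreier g e ts pi LL :
  tvalid (Node g e ts) -> (forall e', In e' pi -> 1 <= e') ->
  Forall2 (fun u l => schreier (budget (pi ++ [e])) l /\
                      forall i, In i l <-> large u (pi ++ [e]) i) ts LL ->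
  exists l, schreier (budget pi) l /\ forall i, In i l <-> large (Node g e ts) pi i.
Proof.
  intros Hv Hpi HLL.
  pose proof Hv as Hv'. apply tvalid_node in Hv'.
  destruct Hv' as [_ [He [Hsucc [Hadm [Hodd Hall]]]]].
  assert (Hpi' : forall e', In e' (pi ++ [e]) -> 1 <= e').
  { intros e' H. apply in_app_or in H. destruct H as [H|[<-|[]]]; auto. }
  assert (Hiff : forall i, In i (concat LL) <-> large (Node g e ts) pi i).
  { intros i. rewrite large_node_iff. apply (in_concat_Forall2 (fun u i => large u (pi ++ [e]) i)).
    eapply Forall2_impl; [|exact HLL]. simpl. tauto. }
  assert (Hsupp : Forall2 (fun u l => StronglySorted lt l /\
                                      forall i, In i l -> fval m u i <> 0%R) ts LL).
  { eapply Forall2_impl; [|exact (Forall2_with_in _ _ _ HLL)].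
    simpl. intros u l [Hu [H1 H2]]. rewrite Forall_forall in Hall.
    split; [eapply schreier_sorted; eauto|].
    intros i Hi. apply (large_fval_nonzero u (pi ++ [e])); [auto|]. apply H2; auto. }
  assert (Hsort : StronglySorted lt (concat LL)) by (eapply children_sorted; eauto).
  destruct (concat LL) as [|i0 l0] eqn:Ecat.
  { exists []. split; [apply schreier_nil|]. intros i. rewrite <- Hiff. tauto. }
  assert (Hcost : cost n (pi ++ [e]) <= pk n s K - 1).
  { apply (large_node_cost g e ts pi i0); auto. apply Hiff. simpl; auto. }
  rewrite <- Ecat in *. exists (concat LL). split; [|exact Hiff].
  assert (Hheads : schreier (node_cost n e) (map (hd O) (filter nonnil LL))).
  { unfold node_cost. destruct (Nat.even e) eqn:Ee.
    - apply (even_node_heads e ts); auto. eapply Forall2_impl; [|exact Hsupp]. simpl; tauto.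
    - destruct (Hodd eq_refl) as [Hchild HND].
      apply (odd_node_heads (pi ++ [e]) ts); auto; [|rewrite Ecat; discriminate].
      eapply Forall2_impl; [|exact HLL]. simpl; tauto. }
  assert (HLs : Forall (fun F => F <> [] /\ schreier (budget (pi ++ [e])) F)
                       (filter nonnil LL)).
  { apply filter_nonnil_Forall. apply Forall_forall. intros l Hl.
    destruct (Forall2_in_r _ _ _ _ HLL Hl) as [u [_ [H1 _]]]. auto. }
  rewrite <- concat_filter_nonnil in Hsort |- *.
  replace (budget pi) with (budget (pi ++ [e]) + node_cost n e)
    by (unfold budget; rewrite cost_app, cost_single in *; lia).
  apply schreier_union; auto.
Qed.

Lemma large_leaves_schreier t : tvalid t -> forall pi, (forall e, In e pi -> 1 <= e) ->
  exists l, schreier (budget pi) l /\ forall i, In i l <-> large t pi i.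
Proof.
  induction t as [g j|g e ts IH] using ftree_nested_ind; intros Hv pi Hpi.
  - apply large_leaf_schreier; auto.
  - pose proof Hv as Hv'. apply tvalid_node in Hv'. destruct Hv' as [_ [He [_ [_ [_ Hall]]]]].
    assert (Hpi' : forall e', In e' (pi ++ [e]) -> 1 <= e').
    { intros e' H. apply in_app_or in H. destruct H as [H|[<-|[]]]; auto. }
    assert (HF : Forall (fun u => exists l, schreier (budget (pi ++ [e])) l /\
                                   forall i, In i l <-> large u (pi ++ [e]) i) ts).
    { rewrite Forall_forall in IH, Hall |- *. intros u Hu. apply IH; auto. }
    destruct (Forall_exists_Forall2 _ _ HF) as [LL HLL].
    apply (large_node_schreier g e ts pi LL); auto.
Qed.

End LargeLeaves.

Open Scope R_scope.

Lemma large_coefficient_iff (c : R) (P M : nat) : c <> 0 -> (1 <= P)%nat -> (1 <= M)%nat ->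
  (Rabs (c / INR P) >= 2 * Rabs c / INR M <-> (2 * P <= M)%nat).
Proof.
  intros Hc HP HM. apply le_INR in HP, HM. simpl in HP, HM.
  assert (HA : 0 < Rabs c) by (apply Rabs_pos_lt; auto).
  assert (Hinv : 0 < / (INR P * INR M)) by (apply Rinv_0_lt_compat; nra).
  assert (Hdiff : Rabs (c / INR P) - 2 * Rabs c / INR M =
                  Rabs c * (INR M - 2 * INR P) * / (INR P * INR M)).
  { unfold Rdiv. rewrite Rabs_mult, Rabs_inv, (Rabs_pos_eq (INR P)) by lra. field. lra. }
  assert (H2 : INR 2 = 2) by (simpl; lra).
  split; intros H.
  - apply INR_le. rewrite mult_INR, H2.
    destruct (Rle_lt_dec (2 * INR P) (INR M)) as [|Hlt]; auto.
    assert (Rabs c * (INR M - 2 * INR P) < 0) by nra. nra.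
  - apply le_INR in H. rewrite mult_INR, H2 in H.
    assert (0 <= Rabs c * (INR M - 2 * INR P)) by nra. nra.
Qed.

Lemma large_root_iff (m n s : nat -> nat) (p q : R) (NN : func -> Prop) (k : nat)
  (x : func) (t : ftree) (i : nat) :
  MN_conditions m n s -> (1 <= k)%nat -> tvalid m n p q NN t ->
  x = (fun i => gam t * fval m t i) ->
  large m k t [] i <->
  exists c, In (c, i) (leaves t) /\
    Rabs (x i) >= 2 * Rabs c / INR (m (2 * k)%nat) /\ (2 * k <= i)%nat.
Proof.
  intros HMN Hk Hv ->.
  assert (HM : (1 <= m (2 * k))%nat) by (apply (m_pos m n s HMN); lia).
  unfold large. rewrite leaves_leaf_paths. split.
  - intros [c [pa [Hin [H1 H2]]]].
    destruct (leaf_coefficient m n s p q NN HMN t Hv c i pa Hin) as [V1 [V2 V3]].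
    exists c. split; [apply in_map_iff; exists ((c, i), pa); auto|].
    split; auto. rewrite V1. apply large_coefficient_iff; auto. apply (prodm_pos m n s HMN); auto.
  - intros [c [Hin [H1 H2]]]. apply in_map_iff in Hin.
    destruct Hin as [[[c' i'] pa] [Heq Hin]]. simpl in Heq. injection Heq as -> ->.
    destruct (leaf_coefficient m n s p q NN HMN t Hv c i pa Hin) as [V1 [V2 V3]].
    exists c, pa. split; auto. split; auto. rewrite V1 in H1.
    apply large_coefficient_iff in H1; auto. apply (prodm_pos m n s HMN); auto.
Qed.

Theorem mainTheorem10 (m n s : nat -> nat) (p q : R) (NN : func -> Prop)
  (x : func) (t : ftree) (k : nat)
  (HMN : MN_conditions m n s)
  (Hp : 1 < p) (Hq : 1 < q) (Hpq : / p + / q = 1)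
  (HNN : schreier_norming m n p q NN)
  (Hx : NN x) (Ht : functional_tree m n p q NN x t) (Hk : (1 <= k)%nat) :
  in_schreier (pk n s k - 1)
    (fun i => exists c, In (c, i) (leaves t) /\
       Rabs (x i) >= 2 * Rabs c / INR (m (2 * k)%nat) /\ (2 * k <= i)%nat).
Proof.
  destruct Ht as [_ [Hxt Hv]].
  destruct (large_leaves_schreier m n s p q NN k HMN Hk t Hv [] (fun e H => match H with end))
    as [l [Hl Hiff]].
  exists l. split.
  - unfold budget, cost in Hl. simpl in Hl. rewrite Nat.sub_0_r in Hl. exact Hl.
  - intros i. rewrite Hiff. apply (large_root_iff m n s p q NN); auto.
Qed.
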